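(* Assume H1 and that at least one of H2, H3 holds. Let $W=W_q$ for some $q\in\mathbb{N}^*$ if H2 holds and $W=W_\alpha$ for some $\alpha<\eta$ if H3 holds. Then $\sup_{\theta\in\Theta}\{\pi_\theta(W)+\bar\pi_\theta(W)\}<+\infty$.
   Context: $\|\cdot\|$ Euclidean, $\Theta\subset\mathbb{R}^{d_\Theta}$ nonempty. $\mathtt{m}$-convex: $V(tx+(1-t)y)\le tV(x)+(1-t)V(y)-(\mathtt{m}/2)t(1-t)\|x-y\|^2$. H1: for every $\theta\in\Theta$ convex $V_\theta,\bar V_\theta,U_\theta,\bar U_\theta:\mathbb{R}^d\to[0,\infty)$ with (a) $\pi_\theta(x)\propto e^{-V_\theta(x)-U_\theta(x)}$, $\bar\pi_\theta(x)\propto e^{-\bar V_\theta(x)-\bar U_\theta(x)}$ probability densities and $\min(\inf_\theta\int e^{-V_\theta-U_\theta},\inf_\theta\int e^{-\bar V_\theta-\bar U_\theta})>0$; (b) $V_\theta,\bar V_\theta$ $C^1$ with $L$-Lipschitz gradients, and for each $\theta$ minimizers of $V_\theta,\bar V_\theta$ with norm $\le R_{V,1}$ and minimum values of absolute value $\le R_{V,2}$; (c) $U_\theta,\bar U_\theta$ $M$-Lipschitz with points of norm $\le R_{U,1}$ where $|U_\theta|,|\bar U_\theta|\le R_{U,2}$ (all constants independent of $\theta$). H2: there is $\mathtt{m}>0$ with $V_\theta,\bar V_\theta$ $\mathtt{m}$-convex for all $\theta$. H3: there are $\eta>0,c\ge0$ with $\min(U_\theta(x),\bar U_\theta(x))\ge\eta\|x\|-c$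 for all $\theta,x$. $W_q(x)=1+\|x\|^{2q}$, $W_\alpha(x)=\exp[\alpha\sqrt{1+\|x\|^2}]$; $\mu(W)=\int Wd\mu$. *)

From HB Require Import structures.
From mathcomp Require Import all_boot all_order all_algebra.
From mathcomp Require Import all_classical all_reals all_analysis.
Set Implicit Arguments. Unset Strict Implicit. Unset Printing Implicit Defensive.
Import Order.TTheory GRing.Theory Num.Theory.
Import numFieldNormedType.Exports.
Local Open Scope classical_set_scope.
Local Open Scope ring_scope.

Section Defs.
Variable R : realType.

Definition edot (d : nat) (u v : 'rV[R]_d) : R := \sum_(i < d) u 0 i * v 0 i.
Definition enorm (d : nat) (v : 'rV[R]_d) : R := Num.sqrt (edot v v).

(* Lebesgue integral on R^d of a nonnegative function, as the iterated
   one-dimensional Lebesgue integral (Tonelli). *)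
Fixpoint iint (d : nat) : ('rV[R]_d -> \bar R) -> \bar R :=
  match d with
  | 0 => fun f => f 0
  | d'.+1 => fun f =>
      (\int[@lebesgue_measure R]_x iint (fun v : 'rV[R]_d' => f (row_mx (\row_(j < 1) x) v)))%E
  end.

Definition Zconst (d : nat) (V U : 'rV[R]_d -> R) : \bar R :=
  iint (fun x => (expR (- V x - U x))%:E).

Definition gibbs_mean (d : nat) (V U W : 'rV[R]_d -> R) : \bar R :=
  (iint (fun x => (W x * expR (- V x - U x))%:E) * ((fine (Zconst V U))^-1)%:E)%E.

Definition convex_fun (d : nat) (f : 'rV[R]_d -> R) : Prop :=
  forall (x y : 'rV[R]_d) (t : R), 0 <= t <= 1 ->
    f (t *: x + (1 - t) *: y) <= t * f x + (1 - t) * f y.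

Definition strongly_convex (d : nat) (m : R) (f : 'rV[R]_d -> R) : Prop :=
  forall (x y : 'rV[R]_d) (t : R), 0 <= t <= 1 ->
    f (t *: x + (1 - t) *: y) <=
      t * f x + (1 - t) * f y - (m / 2) * t * (1 - t) * enorm (x - y) ^+ 2.

Definition has_gradient (d : nat) (f : 'rV[R]_d -> R) (g : 'rV[R]_d -> 'rV[R]_d) : Prop :=
  forall x, differentiable f x /\ forall v, 'd f x v = edot (g x) v.

Definition H1b_fun (d : nat) (L RV1 RV2 : R) (f : 'rV[R]_d -> R) : Prop :=
  (exists g : 'rV[R]_d -> 'rV[R]_d,
     has_gradient f g /\ forall x y, enorm (g x - g y) <= L * enorm (x - y)) /\
  (exists xs : 'rV[R]_d, (forall y, f xs <= f y) /\ enorm xs <= RV1 /\ `|f xs| <= RV2).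

Definition H1c_fun (d : nat) (M RU1 RU2 : R) (f : 'rV[R]_d -> R) : Prop :=
  (forall x y, `|f x - f y| <= M * enorm (x - y)) /\
  (exists x0 : 'rV[R]_d, enorm x0 <= RU1 /\ `|f x0| <= RU2).

Definition Wq (d : nat) (q : nat) (x : 'rV[R]_d) : R := 1 + enorm x ^+ (2 * q).
Definition Walpha (d : nat) (a : R) (x : 'rV[R]_d) : R :=
  expR (a * Num.sqrt (1 + enorm x ^+ 2)).

End Defs.

From HB Require Import structures.
From mathcomp Require Import all_boot all_order all_algebra.
From mathcomp Require Import all_classical all_reals all_analysis.
From mathcomp Require Import measurable_realfun exponential_distribution ring lra.
Set Implicit Arguments.
Unset Strict Implicit.
Unset Printing Implicit Defensive.

Import Order.TTheory GRing.Theory Num.Theory.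
Import numFieldNormedType.Exports.
Local Open Scope classical_set_scope.
Local Open Scope ring_scope.

(* Under either hypothesis the integrand [W e^(-V-U)] has an envelope
   [K e^(-b |x|)], with [K] and [b > 0] independent of [theta].  Under H2,
   strong convexity and the bounded minimizer give [-V x <= A - m |x|^2 / 8],
   and this Gaussian factor absorbs the polynomial weight [W_q]; under H3,
   [U x >= eta |x| - c] and [W_alpha x <= e^(alpha+ (1 + |x|))], where
   [alpha+ = max alpha 0], leave the rate [eta - alpha+].  Since
   [|x|_1 <= d |x|], the envelope integrates over [R^d] to at most
   [K (2 (d + 1) / b)^d], one Laplace integral per coordinate, and the uniform
   lower bound on the normalizing constants concludes. *)

Section gibbs_moments.
Variable R : realType.
Local Notation mu := (@lebesgue_measure R).

Lemma edot_ge0 d (x : 'rV[R]_d) : 0 <= edot x x.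
Proof. by apply: sumr_ge0 => i _; rewrite -expr2 sqr_ge0. Qed.

Lemma enorm_ge0 d (x : 'rV[R]_d) : 0 <= enorm x.
Proof. exact: sqrtr_ge0. Qed.

Lemma enorm_sqr d (x : 'rV[R]_d) : enorm x ^+ 2 = edot x x.
Proof. by rewrite sqr_sqrtr // edot_ge0. Qed.

Lemma sqr_enorm_le d (x y : 'rV[R]_d) :
  enorm x ^+ 2 <= 2 * enorm (x - y) ^+ 2 + 2 * enorm y ^+ 2.
Proof.
rewrite !enorm_sqr /edot !mulr_sumr -big_split /=; apply: ler_sum => i _.
by rewrite !mxE; have := sqr_ge0 (x 0 i - 2 * y 0 i); nra.
Qed.

Lemma coord_le_enorm d (x : 'rV[R]_d) i : `|x 0 i| <= enorm x.
Proof.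
rewrite /enorm -sqrtr_sqr ler_sqrt ?edot_ge0 // /edot (bigD1 i) //= expr2 lerDl.
by apply: sumr_ge0 => j _; rewrite -expr2 sqr_ge0.
Qed.

Definition l1norm d (x : 'rV[R]_d) : R := \sum_(i < d) `|x 0 i|.

Lemma l1norm_row_mx d (x : R) (v : 'rV[R]_d) :
  l1norm (row_mx (\row_(j < 1) x) v) = `|x| + l1norm v.
Proof.
rewrite /l1norm (@big_split_ord _ _ _ 1 d) /= big_ord1.
rewrite (row_mxEl (\row_(j < 1) x) v 0 ord0) mxE; congr (_ + _).
by apply: eq_bigr => i _; rewrite (row_mxEr (\row_(j < 1) x) v 0 i).
Qed.

Lemma l1norm_le_enorm d (x : 'rV[R]_d) : l1norm x <= enorm x *+ d.
Proof.
rewrite -[d in _ *+ d]card_ord -sumr_const; apply: ler_sum => i _.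
exact: coord_le_enorm.
Qed.

Lemma ge0_le_integralT (f g : R -> \bar R) : (forall x, 0 <= f x)%E ->
  (forall x, f x <= g x)%E -> (\int[mu]_x f x <= \int[mu]_x g x)%E.
Proof.
move=> f0 fg.
have g0 x : (0 <= g x)%E by exact: le_trans (f0 x) (fg x).
rewrite (ge0_integralTE mu f0) (ge0_integralTE mu g0) /=.
apply: ereal_sup_le => _ [h hf <-]; exists h => //= x.
exact: le_trans (hf x) (fg x).
Qed.

Lemma iint_ge0 d (f : 'rV[R]_d -> \bar R) :
  (forall x, 0 <= f x)%E -> (0 <= iint f)%E.
Proof.
elim: d f => [|d IH] f f0 /=; first exact: f0.
by apply: integral_ge0 => x _; apply: IH => v; exact: f0.
Qed.

Lemma le_iint d (f g : 'rV[R]_d -> \bar R) : (forall x, 0 <= f x)%E ->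
  (forall x, f x <= g x)%E -> (iint f <= iint g)%E.
Proof.
elim: d f g => [|d IH] f g f0 fg /=; first exact: fg.
apply: ge0_le_integralT => x; first by apply: iint_ge0 => v; exact: f0.
by apply: IH => v; [exact: f0 | exact: fg].
Qed.

Lemma integral_oppr (f : R -> \bar R) : measurable_fun [set: R] f ->
  (forall x, 0 <= f x)%E -> (\int[mu]_x f (- x)%R = \int[mu]_x f x)%E.
Proof.
move=> mf f0.
have mN : measurable_fun [set: R] (-%R : R -> measurableTypeR R).
  exact: oppr_measurable.
have <- : (\int[pushforward mu (-%R : R -> measurableTypeR R)]_x f x
          = \int[mu]_x f x)%E.
  by apply: eq_measure_integral => A mA _; exact: lebesgue_measureN.
by rewrite ge0_integral_pushforward.
Qed.

(* [c e^(-b |x|)] is dominated by [c / b] times the sum of the exponential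
   densities of rate [b] at [x] and at [-x]. *)
Lemma integral_expR_abs_le (b c : R) : 0 < b -> 0 <= c ->
  (\int[mu]_x (c * expR (- b * `|x|))%:E <= (c * (2 / b))%:E)%E.
Proof.
move=> b0 c0; pose p := exponential_pdf b.
have cb0 : 0 <= c / b by rewrite divr_ge0 // ltW.
have p0 x : 0 <= p x by apply: exponential_pdf_ge0; exact: ltW.
have cp0 x : (0 <= ((c / b) * p x)%:E)%E by rewrite lee_fin mulr_ge0.
have mcp : measurable_fun [set: R] (fun x => ((c / b) * p x)%:E).
  apply/measurable_EFinP; apply: measurable_funM; first exact: measurable_cst.
  exact: measurable_exponential_pdf.
have int_cp : (\int[mu]_x ((c / b) * p x)%:E = (c / b)%:E)%E.
  under eq_integral do rewrite EFinM.
  rewrite ge0_integralZl_EFin //; last first.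
    by apply/measurable_EFinP; exact: measurable_exponential_pdf.
  - by move=> x _; rewrite lee_fin.
  - by rewrite integral_exponential_pdf // mule1.
have pE y : 0 <= y -> p y = b * expR (- b * y).
  by move=> y0; exact: exponential_pdfE.
apply: (@le_trans _ _
  (\int[mu]_x (((c / b) * p x)%:E + ((c / b) * p (- x)%R)%:E))%E).
  apply: ge0_le_integralT => x; first by rewrite lee_fin mulr_ge0 // expR_ge0.
  rewrite -EFinD lee_fin.
  have [x0|x0] := leP 0 x.
    by rewrite pE // ger0_norm // mulrA divfK ?gt_eqF // lerDl mulr_ge0.
  rewrite (pE (- x)); last by rewrite oppr_ge0 ltW.
  by rewrite ltr0_norm // mulrA divfK ?gt_eqF // mulrN lerDr mulr_ge0.
rewrite ge0_integralD //; last first.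
  apply/measurable_EFinP; apply: measurable_funM => //.
  apply: measurableT_comp; first exact: measurable_exponential_pdf.
  exact: oppr_measurable.
rewrite (@integral_oppr (fun x => ((c / b) * p x)%:E)) // int_cp -EFinD lee_fin.
by rewrite [leRHS](_ : _ = c / b + c / b) //; ring.
Qed.

Lemma iint_expR_l1norm_le d (b K : R) : 0 < b -> 0 <= K ->
  (iint (fun x : 'rV[R]_d => (K * expR (- b * l1norm x))%:E)
    <= (K * (2 / b) ^+ d)%:E)%E.
Proof.
move=> b0; elim: d K => [|d IH] K K0 /=.
  by rewrite /l1norm big_ord0 mulr0 expR0 expr0.
have Kd : 0 <= K * (2 / b) ^+ d.
  by rewrite mulr_ge0 // exprn_ge0 // divr_ge0 // ltW.
rewrite exprSr (mulrA K).
apply: (@le_trans _ _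
  (\int[mu]_x ((K * (2 / b) ^+ d) * expR (- b * `|x|))%:E)%E).
  2: exact: integral_expR_abs_le.
apply: ge0_le_integralT => x.
  by apply: iint_ge0 => v; rewrite lee_fin mulr_ge0 // expR_ge0.
under eq_fun do rewrite l1norm_row_mx mulrDr expRD mulrA.
rewrite mulrAC; apply: IH.
by rewrite mulr_ge0 // expR_ge0.
Qed.

Lemma iint_expR_enorm_le d (b K : R) : 0 < b -> 0 <= K ->
  (iint (fun x : 'rV[R]_d => (K * expR (- b * enorm x))%:E)
    <= (K * (2 * d.+1%:R / b) ^+ d)%:E)%E.
Proof.
move=> b0 K0; set b' := b / d.+1%:R.
have b'0 : 0 < b' by rewrite divr_gt0 // ltr0n.
have -> : 2 * d.+1%:R / b = 2 / b' by rewrite /b' invf_div mulrA.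
apply: le_trans (iint_expR_l1norm_le d b'0 K0).
apply: le_iint => x; first by rewrite lee_fin mulr_ge0 // expR_ge0.
rewrite lee_fin ler_wpM2l // ler_expR !mulNr lerN2.
apply: (@le_trans _ _ (b' * (enorm x *+ d.+1))).
  rewrite ler_pM2l //; apply: le_trans (l1norm_le_enorm x) _.
  by rewrite mulrSr lerDl enorm_ge0.
by rewrite -mulr_natr mulrCA divfK ?pnatr_eq0 // mulrC.
Qed.

Lemma gibbs_mean_le d (V U W : 'rV[R]_d -> R) (K b z : R) : 0 < b -> 0 < z ->
  (forall x, 0 <= W x) ->
  (forall x, W x * expR (- V x - U x) <= K * expR (- b * enorm x)) ->
  (z%:E <= Zconst V U)%E ->
  (gibbs_mean V U W <= (K * (2 * d.+1%:R / b) ^+ d / z)%:E)%E.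
Proof.
move=> b0 z0 W0 WK zZ.
have WE0 x : 0 <= W x * expR (- V x - U x) by rewrite mulr_ge0 // expR_ge0.
have K0 : 0 <= K.
  rewrite -(pmulr_lge0 _ (expR_gt0 (- b * enorm (0 : 'rV[R]_d)))).
  exact: le_trans (WE0 0) (WK 0).
have B0 : 0 <= K * (2 * d.+1%:R / b) ^+ d.
  by rewrite mulr_ge0 // exprn_ge0 // divr_ge0 ?mulr_ge0 // ltW.
have int_le : (iint (fun x => (W x * expR (- V x - U x))%:E)
               <= (K * (2 * d.+1%:R / b) ^+ d)%:E)%E.
  apply: le_trans (iint_expR_enorm_le d b0 K0).
  by apply: le_iint => x; rewrite lee_fin ?WE0 ?WK.
rewrite /gibbs_mean; have [-> /=|Zoo] := eqVneq (Zconst V U) +oo%E.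
  by rewrite invr0 mule0 lee_fin divr_ge0 // ltW.
have Zfin : Zconst V U \is a fin_num.
  by rewrite ge0_fin_numE ?ltey // (le_trans _ zZ) // lee_fin ltW.
have zZ' : z <= fine (Zconst V U) by rewrite -lee_fin fineK.
have Z0 : 0 < fine (Zconst V U) by apply: lt_le_trans zZ'.
apply: le_trans (lee_wpmul2r _ int_le) _; first by rewrite lee_fin invr_ge0 ltW.
by rewrite -EFinM lee_fin ler_wpM2l // lef_pV2 ?posrE.
Qed.

Lemma strongly_convex_growth d m (V : 'rV[R]_d -> R) xs x :
  strongly_convex m V -> (forall y, V xs <= V y) ->
  V xs + m / 4 * enorm (x - xs) ^+ 2 <= V x.
Proof.
move=> scV minV.
have half01 : 0 <= (1 / 2 : R) <= 1 by apply/andP; split; lra.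
have := scV x xs (1 / 2) half01.
have := minV ((1 / 2) *: x + (1 - 1 / 2) *: xs).
lra.
Qed.

Lemma strongly_convex_exponent_le d m (V U : 'rV[R]_d -> R) RV1 RV2 xs x :
  0 < m -> strongly_convex m V -> (forall y, V xs <= V y) ->
  enorm xs <= RV1 -> `|V xs| <= RV2 -> 0 <= U x ->
  - V x - U x <= RV2 + m / 4 * RV1 ^+ 2 - m / 8 * enorm x ^+ 2.
Proof.
move=> m0 scV minV xsR VxsR U0.
have growth := strongly_convex_growth x scV minV.
have VxsN : - RV2 <= V xs.
  by rewrite lerNl (le_trans _ VxsR) // -normrN ler_norm.
have xs2 : enorm xs ^+ 2 <= RV1 ^+ 2.
  by rewrite lerXn2r // nnegrE ?enorm_ge0 // (le_trans (enorm_ge0 xs)).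
have m4 : 0 <= m / 4 by rewrite divr_ge0 // ltW.
have := ler_wpM2l m4 (sqr_enorm_le x xs); have := ler_wpM2l m4 xs2.
lra.
Qed.

Lemma exprn_le_expR (a s : R) (q : nat) : 0 < a -> 0 <= s -> (0 < q)%N ->
  s ^+ q <= (2 * q%:R / a) ^+ q * expR (a * s / 2).
Proof.
move=> a0 s0 q0.
have qR : q%:R != 0 :> R by rewrite pnatr_eq0 -lt0n.
set y := a * s / (2 * q%:R).
have y0 : 0 <= y by rewrite /y divr_ge0 ?mulr_ge0 // ltW.
have -> : expR (a * s / 2) = expR y ^+ q.
  by rewrite -expRM_natl; congr expR; rewrite /y; field.
have -> : s ^+ q = (2 * q%:R / a) ^+ q * y ^+ q.
  by rewrite -exprMn; congr (_ ^+ _); rewrite /y; field; rewrite qR gt_eqF.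
have c0 : 0 <= 2 * q%:R / a by rewrite divr_ge0 ?mulr_ge0 // ltW.
rewrite ler_wpM2l ?exprn_ge0 // lerXn2r ?nnegrE ?expR_ge0 //.
by rewrite (le_trans _ (expR_ge1Dx y)) // lerDr.
Qed.

(* [a r^2 - r + 1 / (4 a) = (2 a r - 1)^2 / (4 a)] *)
Lemma expR_sqr_le (a r : R) : 0 < a ->
  expR (- a * r ^+ 2) <= expR (1 / (4 * a) - r).
Proof.
move=> a0; rewrite ler_expR mulNr.
have : 0 <= (2 * a * r - 1) ^+ 2 / (4 * a).
  by rewrite divr_ge0 ?sqr_ge0 ?mulr_ge0 // ltW.
have -> : (2 * a * r - 1) ^+ 2 / (4 * a) = a * r ^+ 2 - r + 1 / (4 * a).
  by field; rewrite gt_eqF.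
lra.
Qed.

Lemma Wq_envelope_le d q (a A E : R) (x : 'rV[R]_d) : 0 < a -> (0 < q)%N ->
  E <= A - a * enorm x ^+ 2 ->
  Wq q x * expR E
    <= expR (A + 1 / (2 * a)) * (1 + (2 * q%:R / a) ^+ q) * expR (- enorm x).
Proof.
move=> a0 q0 EA.
set r := enorm x; set s := r ^+ 2; set Q := (2 * q%:R / a) ^+ q.
have s0 : 0 <= s := sqr_ge0 r.
have Q0 : 0 <= 1 + Q by rewrite addr_ge0 ?exprn_ge0 ?divr_ge0 ?mulr_ge0 // ltW.
have -> : Wq q x = 1 + s ^+ q by rewrite /Wq exprM.
have expE : expR E <= expR A * expR (- a * s) by rewrite -expRD ler_expR mulNr.
have half : expR (- a * s) <= expR (- (a / 2) * s).
  by rewrite ler_expR !mulNr lerN2; apply: ler_wpM2r => //; lra.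
have poly : s ^+ q * expR (- a * s) <= Q * expR (- (a / 2) * s).
  have -> : Q * expR (- (a / 2) * s) = Q * expR (a * s / 2) * expR (- a * s).
    by rewrite -mulrA -expRD; congr (_ * expR _); field.
  by apply: ler_wpM2r; [exact: expR_ge0 | exact: exprn_le_expR].
have gauss : expR (- (a / 2) * s) <= expR (1 / (2 * a) - r).
  have := @expR_sqr_le (a / 2) r; rewrite divr_gt0 // => /(_ isT).
  by rewrite (_ : 4 * (a / 2) = 2 * a) //; field.
have -> : expR (A + 1 / (2 * a)) * (1 + Q) * expR (- r)
          = expR A * ((1 + Q) * expR (1 / (2 * a) - r)) by rewrite !expRD; ring.
apply: le_trans (ler_wpM2l (addr_ge0 ler01 (exprn_ge0 q s0)) expE) _.
rewrite mulrCA; apply: ler_wpM2l; first exact: expR_ge0.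
apply: le_trans _ (ler_wpM2l Q0 gauss).
by rewrite !mulrDl !mul1r lerD.
Qed.

Lemma Walpha_envelope_le d (eta c alpha E : R) (x : 'rV[R]_d) :
  E <= c - eta * enorm x ->
  Walpha alpha x * expR E
    <= expR (Num.max alpha 0 + c) * expR (- (eta - Num.max alpha 0) * enorm x).
Proof.
rewrite /Walpha -!expRD ler_expR.
set r := enorm x; set al := Num.max alpha 0 => Ec.
have r0 : 0 <= r := enorm_ge0 x.
have al0 : 0 <= al by rewrite le_max lexx orbT.
have alpha_al : alpha <= al by rewrite le_max lexx.
have sqrt_le : Num.sqrt (1 + r ^+ 2) <= 1 + r.
  rewrite -[leRHS]ger0_norm ?addr_ge0 // -sqrtr_sqr ler_sqrt ?sqr_ge0 //.
  by rewrite sqrrD; nra.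
have : alpha * Num.sqrt (1 + r ^+ 2) <= al * (1 + r).
  apply: le_trans (ler_wpM2r (sqrtr_ge0 _) alpha_al) _.
  exact: ler_wpM2l.
have -> : al * (1 + r) = al + al * r by ring.
have -> : - (eta - al) * r = al * r - eta * r by ring.
lra.
Qed.

Lemma gibbs_mean_Wq_le d m q (V U : 'rV[R]_d -> R) RV1 RV2 z :
  0 < m -> (0 < q)%N -> 0 < z -> strongly_convex m V -> (forall x, 0 <= U x) ->
  (exists xs, (forall y, V xs <= V y) /\ enorm xs <= RV1 /\ `|V xs| <= RV2) ->
  (z%:E <= Zconst V U)%E ->
  (gibbs_mean V U (Wq q) <= (expR (RV2 + m / 4 * RV1 ^+ 2 + 4 / m)
     * (1 + (16 * q%:R / m) ^+ q) * (2 * d.+1%:R) ^+ d / z)%:E)%E.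
Proof.
move=> m0 q0 z0 scV U0 [xs [minV [xsR VxsR]]] zZ.
have -> : 4 / m = 1 / (2 * (m / 8)) by field; rewrite gt_eqF.
have -> : 16 * q%:R / m = 2 * q%:R / (m / 8) by field; rewrite gt_eqF.
rewrite -[2 * d.+1%:R]divr1; apply: gibbs_mean_le zZ => // x.
  by rewrite addr_ge0 ?exprn_ge0 ?enorm_ge0.
rewrite mulN1r; apply: Wq_envelope_le => //; first by rewrite divr_gt0.
exact: strongly_convex_exponent_le.
Qed.

Lemma gibbs_mean_Walpha_le d eta c alpha (V U : 'rV[R]_d -> R) z :
  0 < eta -> alpha < eta -> 0 < z ->
  (forall x, 0 <= V x) -> (forall x, eta * enorm x - c <= U x) ->
  (z%:E <= Zconst V U)%E ->
  (gibbs_mean V U (Walpha alpha) <= (expR (Num.max alpha 0 + c)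
     * (2 * d.+1%:R / (eta - Num.max alpha 0)) ^+ d / z)%:E)%E.
Proof.
move=> eta0 alpha_eta z0 V0 U_ge zZ.
apply: gibbs_mean_le zZ => //; first by rewrite subr_gt0 gt_max alpha_eta eta0.
  by move=> x; rewrite expR_ge0.
move=> x; apply: Walpha_envelope_le.
by have := V0 x; have := U_ge x; lra.
Qed.

End gibbs_moments.

Theorem lemma27 (R : realType) (d dT : nat) (Theta : set 'rV[R]_dT)
  (V Vb U Ub : 'rV[R]_dT -> 'rV[R]_d -> R)
  (L M RV1 RV2 RU1 RU2 : R) :
  Theta !=set0 ->
  (* H1 *)
  (forall th, Theta th ->
     convex_fun (V th) /\ convex_fun (Vb th) /\ convex_fun (U th) /\ convex_fun (Ub th) /\
     (forall x, 0 <= V th x /\ 0 <= Vb th x /\ 0 <= U th x /\ 0 <= Ub th x)) ->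
  (* H1(a) *)
  (forall th, Theta th ->
     (Zconst (V th) (U th) < +oo)%E /\ (Zconst (Vb th) (Ub th) < +oo)%E) ->
  (exists c : R, 0 < c /\ forall th, Theta th ->
     (c%:E <= Zconst (V th) (U th))%E /\ (c%:E <= Zconst (Vb th) (Ub th))%E) ->
  (* H1(b) *)
  (forall th, Theta th -> H1b_fun L RV1 RV2 (V th) /\ H1b_fun L RV1 RV2 (Vb th)) ->
  (* H1(c) *)
  (forall th, Theta th -> H1c_fun M RU1 RU2 (U th) /\ H1c_fun M RU1 RU2 (Ub th)) ->
  (* H2 case *)
  ((exists m : R, 0 < m /\ forall th, Theta th ->
       strongly_convex m (V th) /\ strongly_convex m (Vb th)) ->
     forall q : nat, (0 < q)%N ->
       exists C : R, forall th, Theta th ->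
         (gibbs_mean (V th) (U th) (Wq q) + gibbs_mean (Vb th) (Ub th) (Wq q) <= C%:E)%E)
  /\
  (* H3 case *)
  (forall eta c : R, 0 < eta -> 0 <= c ->
     (forall th, Theta th -> forall x,
        Num.min (U th x) (Ub th x) >= eta * enorm x - c) ->
     forall alpha : R, alpha < eta ->
       exists C : R, forall th, Theta th ->
         (gibbs_mean (V th) (U th) (Walpha alpha)
            + gibbs_mean (Vb th) (Ub th) (Walpha alpha) <= C%:E)%E).
Proof.
move=> _ H1 _ [z [z0 Zz]] H1b _; split.
- case=> m [m0 Hm] q q0.
  pose B := expR (RV2 + m / 4 * RV1 ^+ 2 + 4 / m)
    * (1 + (16 * q%:R / m) ^+ q) * (2 * d.+1%:R) ^+ d / z.
  exists (B + B) => th Tth; rewrite EFinD.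
  have [_ [_ [_ [_ pos]]]] := H1 th Tth.
  have [[_ minV] [_ minVb]] := H1b th Tth.
  have [[scV scVb] [ZV ZVb]] := (Hm th Tth, Zz th Tth).
  apply: leeD; apply: gibbs_mean_Wq_le => // x; by case: (pos x) => _ [_ []].
- move=> eta c eta0 _ Umin alpha alpha_eta.
  pose B := expR (Num.max alpha 0 + c)
    * (2 * d.+1%:R / (eta - Num.max alpha 0)) ^+ d / z.
  exists (B + B) => th Tth; rewrite EFinD.
  have [_ [_ [_ [_ pos]]]] := H1 th Tth.
  have [ZV ZVb] := Zz th Tth.
  have [UV UVb] : (forall x, eta * enorm x - c <= U th x)
                  /\ (forall x, eta * enorm x - c <= Ub th x).
    by split=> x; have := Umin th Tth x; rewrite le_min => /andP[].
  apply: leeD; apply: gibbs_mean_Walpha_le => // x.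
    by case: (pos x).
  by case: (pos x) => _ [].
Qed.
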